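(* Let $\mathfrak{g}$ be a finite-dimensional real Lie algebra, fix a sign $\pm$, and let $\mathbf{M}_{\pm}(q,p) = \mp\operatorname{ad}_q^{*}p$ for $(q,p)\in T^{*}\mathfrak{g}=\mathfrak{g}\times\mathfrak{g}^{*}$. Let $f\colon\mathfrak{g}^{*}\to\mathbb{R}$ be a Casimir of the $(\pm)$-Lie--Poisson bracket $\{f_1,f_2\}_{\pm}(\mu) = \pm\langle\mu,[Df_1(\mu),Df_2(\mu)]\rangle$, define $F := f\circ\mathbf{M}_{\pm}$ and $\gamma\colon T^{*}\mathfrak{g}\to\mathfrak{g}$, $\gamma(q,p) := Df(\mathbf{M}_{\pm}(q,p))$, and consider the $\mathbb{R}$ (Lie algebra) action on $T^{*}\mathfrak{g}$ given by the vector fields $$s_{T^{*}\mathfrak{g}}(q,p) := \big(\pm\operatorname{ad}_{s\gamma(q,p)}q,\ \mp\operatorname{ad}^{*}_{s\gamma(q,p)}p\big),\qquad s\in\mathbb{R}.$$ Then $F$ is the momentum map of this action (i.e. $X_{sF} = s_{T^{*}\mathfrak{g}}$ for all $s$, with $X$ the Hamiltonian vector field for the canonical symplectic structure). Moreover, for any smooth $h\colon\mathfrak{g}^{*}\to\mathbb{R}$, the Hamiltonian $H := h\circ\mathbf{M}_{\pm}$ is infinitesimally invariant under this action, and $F$ is an invariant of the canonical Hamiltonian system $\dot q=\partial H/\partial p$, $\dot p=-\partial H/\partial q$.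
   Context: $\operatorname{ad}_{x}y=[x,y]$, $\operatorname{ad}_{x}^{*}$ is its dual: $\langle \operatorname{ad}_{x}^{*}\alpha, y\rangle = \langle \alpha,[x,y]\rangle$. For smooth $f\colon\mathfrak{g}^{*}\to\mathbb{R}$, $Df(\mu)\in\mathfrak{g}$ is defined by $\langle\delta\mu, Df(\mu)\rangle = \frac{d}{ds}\big|_{s=0}f(\mu+s\delta\mu)$. A Casimir of a Poisson bracket is a function whose bracket with every function vanishes. $T^{*}\mathfrak{g}$ carries the canonical symplectic structure, with Hamiltonian vector field $X_F = (\partial F/\partial p, -\partial F/\partial q)$. *)

From HB Require Import structures.
From mathcomp Require Import all_boot all_order all_algebra.
From mathcomp Require Import all_classical all_reals all_analysis.
Set Implicit Arguments. Unset Strict Implicit. Unset Printing Implicit Defensive.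
Import Order.TTheory GRing.Theory Num.Theory.
Import numFieldNormedType.Exports.
Local Open Scope ring_scope.

(* Conventions: the n-dimensional real Lie algebra g is modelled (in a basis)
   as 'rV[R]_n with a Lie bracket br; its dual g^* is also 'rV[R]_n, with the
   canonical pairing <a, x> = \sum_i a_i x_i (dual basis). *)

Section LieDefs.
Variables (R : realType) (n : nat).
Notation V := 'rV[R]_n.

Definition ebase (i : 'I_n) : V := delta_mx 0 i.

Definition dpair (a x : V) : R := \sum_(i < n) a 0 i * x 0 i.

Definition lie_bracket (br : V -> V -> V) : Prop :=
  [/\ forall a x y z, br (a *: x + y) z = a *: br x z + br y z,
      forall a x y z, br z (a *: x + y) = a *: br z x + br z y,
      forall x, br x x = 0 &
      forall x y z, br x (br y z) + br y (br z x) + br z (br x y) = 0].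

(* ad_x y = [x, y];  ad^*_x alpha : <ad^*_x alpha, y> = <alpha, [x, y]> *)
Definition ad (br : V -> V -> V) (x y : V) : V := br x y.
Definition coad (br : V -> V -> V) (x a : V) : V :=
  \row_(j < n) dpair a (br x (ebase j)).

(* Df(mu) in g : <dmu, Df(mu)> = d/ds|_{s=0} f(mu + s dmu);
   coordinates are the directional derivatives along the basis *)
Definition Dgrad (f : V -> R) (mu : V) : V :=
  \row_(i < n) ('D_(ebase i) f) mu.

Fixpoint iterD (f : V -> R) (vs : seq V) : V -> R :=
  match vs with
  | [::] => f
  | v :: vs' => 'D_v (iterD f vs')
  end.
Definition smooth (f : V -> R) : Prop :=
  forall (vs : seq V) (x : V), differentiable (iterD f vs) x.

Definition sgn (b : bool) : R := if b then 1 else -1.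

Definition lie_poisson (b : bool) (br : V -> V -> V) (f1 f2 : V -> R) (mu : V) : R :=
  sgn b * dpair mu (br (Dgrad f1 mu) (Dgrad f2 mu)).
Definition casimir (b : bool) (br : V -> V -> V) (f : V -> R) : Prop :=
  forall f2 : V -> R, smooth f2 -> forall mu : V, lie_poisson b br f f2 mu = 0.

Definition Mom (b : bool) (br : V -> V -> V) (q p : V) : V :=
  - sgn b *: coad br q p.

(* functions on T^*g = g x g^* are written curried F q p;
   partial gradients dF/dq in g^*, dF/dp in g *)
Definition dFdq (F : V -> V -> R) (q p : V) : V := Dgrad (fun q' => F q' p) q.
Definition dFdp (F : V -> V -> R) (q p : V) : V := Dgrad (F q) p.

Definition hamvf (F : V -> V -> R) (q p : V) : V * V :=
  (dFdp F q p, - dFdq F q p).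

Definition gam (b : bool) (br : V -> V -> V) (f : V -> R) (q p : V) : V :=
  Dgrad f (Mom b br q p).
Definition actvf (b : bool) (br : V -> V -> V) (f : V -> R) (s : R) (q p : V)
  : V * V :=
  (sgn b *: ad br (s *: gam b br f q p) q,
   - sgn b *: coad br (s *: gam b br f q p) p).

End LieDefs.

From Pilot Require Import Defs.
From HB Require Import structures.
From mathcomp Require Import all_boot all_order all_algebra.
From mathcomp Require Import all_classical all_reals all_analysis.
From mathcomp Require Import ring lra.
Import Order.TTheory GRing.Theory Num.Theory.
Import numFieldNormedType.Exports.
Local Open Scope ring_scope.
Set Implicit Arguments. Unset Strict Implicit.
Local Notation dpair := Defs.dpair.

(* By the Jacobi identity, M = -/+ ad^*_q p is infinitesimally equivariant:
   moving (q, p) along the Hamiltonian vector field of a collective function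
   g o M moves M by -/+ ad^*_{Dg(M)} M.  Hence M is a Poisson map: along that
   flow, k o M changes at the rate {k, g}(M) of the Lie-Poisson bracket.  With
   g = s f and k = h this is s {h, f}(M) = 0, the invariance of H; with g = h
   and k = f it is {f, h}(M) = 0, the conservation of F.  The momentum map
   identity X_{sF} = s_{T^*g} is the explicit form of X_{g o M} obtained from
   the bilinearity of M. *)

Section Pairing.
Variables (R : realType) (n : nat).
Notation V := 'rV[R]_n.
Implicit Types (a x y : V) (k : R).

Lemma dpairC a x : dpair a x = dpair x a.
Proof. by apply: eq_bigr => i _; rewrite mulrC. Qed.

Lemma dpairDr a x y : dpair a (x + y) = dpair a x + dpair a y.
Proof. by rewrite /dpair -big_split; apply: eq_bigr => i _; rewrite mxE mulrDr. Qed.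

Lemma dpairZr a k x : dpair a (k *: x) = k * dpair a x.
Proof. by rewrite /dpair mulr_sumr; apply: eq_bigr => i _; rewrite mxE mulrCA. Qed.

Lemma dpairDl a x y : dpair (x + y) a = dpair x a + dpair y a.
Proof. by rewrite !(dpairC _ a) dpairDr. Qed.

Lemma dpairZl a k x : dpair (k *: x) a = k * dpair x a.
Proof. by rewrite !(dpairC _ a) dpairZr. Qed.

Lemma dpairNr a x : dpair a (- x) = - dpair a x.
Proof. by rewrite -scaleN1r dpairZr mulN1r. Qed.

Lemma dpair_ebase a i : dpair a (ebase R i) = a 0 i.
Proof.
rewrite /dpair (bigD1 i) //= big1 => [|j /negbTE ji]; rewrite /ebase mxE.
  by rewrite !eqxx mulr1 addr0.
by rewrite ji andbF mulr0.
Qed.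

Lemma dpair_inj a a' : (forall x, dpair a x = dpair a' x) -> a = a'.
Proof. by move=> eqa; apply/rowP => i; rewrite -!dpair_ebase. Qed.

End Pairing.

Lemma is_derive_0_is_cst_in (R : realType) (g : R -> R) (a c t1 t2 : R) :
  (forall t, a < t < c -> is_derive t 1 g 0) -> a < t1 < c -> a < t2 < c ->
  g t1 = g t2.
Proof.
move=> g'0; wlog le12 : t1 t2 / t1 <= t2.
  by move=> sym ht1 ht2; case: (leP t1 t2) => [|/ltW] le; [exact: sym|exact/esym/sym].
move=> /andP[at1 t1c] /andP[at2 t2c].
have g'0_in x : x \in `[t1, t2] -> is_derive x 1 g 0.
  by rewrite in_itv /= => /andP[t1x xt2]; apply: g'0; apply/andP; split; lra.
have g_cont : {within `[t1, t2], continuous g}%classic.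
  apply: continuous_in_subspaceT => x /[1!inE] /g'0_in g'x.
  exact/differentiable_continuous/derivable1_diffP/(ex_derive (is_derive:=g'x)).
have [x _] := MVT_segment le12 (fun x xin => g'0_in x (subset_itv_oo_cc xin)) g_cont.
by rewrite mul0r => /eqP; rewrite subr_eq0 => /eqP.
Qed.

Section Calculus.
Variables (R : realType) (n : nat).
Notation V := 'rV[R]_n.
Implicit Types (g : V -> R) (x v : V) (t : R).

Lemma deriveE_dpair g x v : differentiable g x -> 'D_v g x = dpair v (Dgrad g x).
Proof.
move=> dg; rewrite deriveE // {1}[v]row_sum_delta linear_sum.
by apply: eq_bigr => i _; rewrite linearZ /= -deriveE // mxE.
Qed.

Lemma is_derive_comp_Dgrad g (c : R -> V) t x dc :
  c t = x -> differentiable g x -> is_derive t 1 c dc ->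
  is_derive t 1 (g \o c) (dpair dc (Dgrad g x)).
Proof.
move=> <- dg dc_t.
have dc' : differentiable c t.
  by apply/derivable1_diffP; exact: (ex_derive (is_derive:=dc_t)).
have dgc : differentiable (g \o c) t by exact: differentiable_comp.
apply: DeriveDef; first exact/derivable1_diffP.
rewrite deriveE // diff_comp //= -deriveE //.
by rewrite -(deriveE _ dc') (derive_val (is_derive:=dc_t)) deriveE_dpair.
Qed.

Lemma is_derive_line x v t : is_derive t 1 (fun s : R => x + s *: v) v.
Proof.
have hs : is_derive t 1 ( *:%R ^~ v : R -> V) v.
  have dv := is_diff_scalel t v.
  apply: DeriveDef; first exact/diff_derivable/ex_diff.
  by rewrite deriveE ?(ex_diff dv) // diff_val /= scale1r.
by have := is_deriveD (is_derive_cst x t 1) hs; rewrite add0r.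
Qed.

Lemma derive_line g x v : 'D_v g x = 'D_1 (fun t : R => g (x + t *: v)) 0.
Proof.
rewrite /derive; congr (lim ((_ @ 0^')%classic)); apply/funext => h /=.
by rewrite scale0r !addr0 [h *: 1]mulr1 [h *: v + x]addrC.
Qed.

Lemma is_derive_row_coord (c : R -> V) t dc k :
  is_derive t 1 c dc -> is_derive t 1 (fun s => c s 0 k) (dc 0 k).
Proof.
move=> dc_t; have ec := ex_derive (is_derive:=dc_t).
apply: DeriveDef; first exact: (derivable_mxP c t 1).1.
by rewrite -(derive_val (is_derive:=dc_t)) derive_mx // mxE.
Qed.

Lemma is_derive_scalel (phi : R -> R) (w : V) t dphi :
  is_derive t 1 phi dphi -> is_derive t 1 (fun s => phi s *: w) (dphi *: w).
Proof.
move=> dphi_t; have dp : differentiable phi t.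
  by apply/derivable1_diffP; exact: (ex_derive (is_derive:=dphi_t)).
have dpw := differentiableZl w dp.
apply: DeriveDef; first exact/derivable1_diffP.
by rewrite deriveE // diffZl // -deriveE // derive_val.
Qed.

Lemma DgradZ g k x : differentiable g x -> Dgrad (fun y => k * g y) x = k *: Dgrad g x.
Proof.
move=> dg; apply/rowP => i; rewrite !mxE.
by rewrite -[fun y => _]/(k \*: g) deriveZ //; exact: diff_derivable.
Qed.

End Calculus.

Definition bilinear_map (R : realType) (n : nat) (m : 'rV[R]_n -> 'rV[R]_n -> 'rV[R]_n) :=
  (forall a x y z, m (a *: x + y) z = a *: m x z + m y z) /\
  (forall a x y z, m z (a *: x + y) = a *: m z x + m z y).

Section Bilinear.
Variables (R : realType) (n : nat).
Notation V := 'rV[R]_n.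
Variable m : V -> V -> V.
Hypothesis mbil : bilinear_map m.
Implicit Types (a x y z : V) (k : R).

Lemma bilinDl x y z : m (x + y) z = m x z + m y z.
Proof. by have := mbil.1 1 x y z; rewrite !scale1r. Qed.

Lemma bilinDr x y z : m z (x + y) = m z x + m z y.
Proof. by have := mbil.2 1 x y z; rewrite !scale1r. Qed.

Lemma bilin0l z : m 0 z = 0.
Proof. by apply: (addrI (m 0 z)); rewrite -bilinDl !addr0. Qed.

Lemma bilin0r z : m z 0 = 0.
Proof. by apply: (addrI (m z 0)); rewrite -bilinDr !addr0. Qed.

Lemma bilinZl k x z : m (k *: x) z = k *: m x z.
Proof. by have := mbil.1 k x 0 z; rewrite !addr0 bilin0l addr0. Qed.

Lemma bilinZr k x z : m z (k *: x) = k *: m z x.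
Proof. by have := mbil.2 k x 0 z; rewrite !addr0 bilin0r addr0. Qed.

Lemma bilinNr x z : m z (- x) = - m z x.
Proof. by rewrite -scaleN1r bilinZr scaleN1r. Qed.

Lemma bilin_expand x y :
  m x y = \sum_(k < n) \sum_(i < n) (x 0 k * y 0 i) *: m (ebase R k) (ebase R i).
Proof.
rewrite {1}[x]row_sum_delta.
rewrite (big_morph (m^~ y) (fun u v => bilinDl u v y) (bilin0l y)).
apply: eq_bigr => k _; rewrite bilinZl {1}[y]row_sum_delta.
rewrite (big_morph (m _) (fun u v => bilinDr u v _) (bilin0r _)) scaler_sumr.
by apply: eq_bigr => i _; rewrite bilinZr scalerA.
Qed.

Lemma coad_dpair x a y : dpair (coad m x a) y = dpair a (m x y).
Proof.
rewrite {2}[y]row_sum_delta (big_morph (m x) (fun u v => bilinDr u v x) (bilin0r x)).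
rewrite /dpair; under [RHS]eq_bigr do rewrite summxE mulr_sumr.
rewrite [RHS]exchange_big /=; apply: eq_bigr => j _.
rewrite mxE /dpair mulr_suml; apply: eq_bigr => i _.
by rewrite bilinZr mxE; ring.
Qed.

Lemma is_derive_bilin (qc pc : R -> V) (t : R) (dq dp : V) :
  is_derive t 1 qc dq -> is_derive t 1 pc dp ->
  is_derive t 1 (fun s => m (qc s) (pc s)) (m dq (pc t) + m (qc t) dp).
Proof.
move=> dq_t dp_t.
have -> : (fun s => m (qc s) (pc s)) = (fun s =>
    \sum_(k < n) \sum_(i < n) (qc s 0 k * pc s 0 i) *: m (ebase R k) (ebase R i)).
  by apply/funext => s; rewrite bilin_expand.
rewrite !bilin_expand -big_split /=.
under eq_bigr do rewrite -big_split /=.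
rewrite -fct_sumE; apply: is_derive_sum => k.
rewrite -fct_sumE; apply: is_derive_sum => i.
have dprod := is_deriveM (is_derive_row_coord k dq_t) (is_derive_row_coord i dp_t).
apply: is_derive_eq (is_derive_scalel _ dprod) _.
by rewrite -scalerDl addrC; congr (_ *: _); congr (_ + _); exact: mulrC.
Qed.

Lemma Dgrad_comp_bilinr g x y : differentiable g (m x y) ->
  Dgrad (fun y' => g (m x y')) y = \row_i dpair (m x (ebase R i)) (Dgrad g (m x y)).
Proof.
move=> dg; apply/rowP => i; rewrite !mxE derive_line.
have c0 : m x (y + 0 *: ebase R i) = m x y by rewrite scale0r addr0.
have := is_derive_comp_Dgrad c0 dg
  (is_derive_bilin (is_derive_cst x (0 : R) 1) (is_derive_line y (ebase R i) 0)).
by rewrite bilin0l add0r => dgc; exact: (derive_val (is_derive:=dgc)).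
Qed.

Lemma Dgrad_comp_bilinl g x y : differentiable g (m x y) ->
  Dgrad (fun x' => g (m x' y)) x = \row_i dpair (m (ebase R i) y) (Dgrad g (m x y)).
Proof.
move=> dg; apply/rowP => i; rewrite !mxE derive_line.
have c0 : m (x + 0 *: ebase R i) y = m x y by rewrite scale0r addr0.
have := is_derive_comp_Dgrad c0 dg
  (is_derive_bilin (is_derive_line x (ebase R i) 0) (is_derive_cst y (0 : R) 1)).
by rewrite bilin0r addr0 => dgc; exact: (derive_val (is_derive:=dgc)).
Qed.

Lemma coad_bilinear : bilinear_map (coad m).
Proof.
split=> a x y z; apply/rowP => j; rewrite !mxE.
  by rewrite mbil.1 dpairDr dpairZr.
by rewrite dpairDl dpairZl.
Qed.

Lemma Mom_bilinear b : bilinear_map (Mom b m).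
Proof.
split=> a x y z; rewrite /Mom (coad_bilinear.1, coad_bilinear.2);
  by rewrite scalerDr !scalerA mulrC.
Qed.

End Bilinear.

Section LiePoisson.
Variables (R : realType) (n : nat).
Notation V := 'rV[R]_n.
Variable br : V -> V -> V.
Hypothesis Hbr : lie_bracket br.
Implicit Types (x y q p X Y : V) (b : bool).

Lemma lie_bracket_bilinear : bilinear_map br.
Proof. by case: Hbr. Qed.

Lemma lie_bracketC x y : br x y = - br y x.
Proof.
have [_ _ alt _] := Hbr; have := alt (x + y).
rewrite (bilinDl lie_bracket_bilinear) !(bilinDr lie_bracket_bilinear) !alt add0r addr0.
by move/eqP; rewrite addr_eq0 => /eqP.
Qed.

Lemma Mom_equivariant b Y q p :
  Mom b br (sgn R b *: br Y q) p + Mom b br q (- sgn R b *: coad br Y p) =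
  - sgn R b *: coad br Y (Mom b br q p).
Proof.
have [_ _ _ jacobi] := Hbr; have brbil := lie_bracket_bilinear.
apply: dpair_inj => X.
have jacobiX : br (br Y q) X = br Y (br q X) + br q (br X Y).
  by rewrite (lie_bracketC _ X); apply/esym/eqP; rewrite -subr_eq0 opprK jacobi.
rewrite dpairDl /Mom !dpairZl !(coad_dpair brbil) (bilinZl brbil) dpairZr.
rewrite dpairZl (coad_dpair brbil) jacobiX dpairDr (lie_bracketC X Y).
rewrite (bilinNr brbil) dpairNr dpairZl (coad_dpair brbil); ring.
Qed.

Lemma hamvf_Mom b g q p : differentiable g (Mom b br q p) ->
  hamvf (fun q' p' => g (Mom b br q' p')) q p =
  (sgn R b *: br (Dgrad g (Mom b br q p)) q,
   - sgn R b *: coad br (Dgrad g (Mom b br q p)) p).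
Proof.
move=> dg; have brbil := lie_bracket_bilinear; have Mbil := Mom_bilinear brbil b.
rewrite /hamvf /dFdp /dFdq (Dgrad_comp_bilinr Mbil dg) (Dgrad_comp_bilinl Mbil dg).
congr pair; apply/rowP => i; rewrite !mxE /Mom dpairZl (coad_dpair brbil).
  by rewrite dpairC dpair_ebase (lie_bracketC _ q) mxE; ring.
by rewrite (lie_bracketC _ (ebase R i)) dpairNr; ring.
Qed.

Lemma is_derive_Mom_hamvf b g k (qc pc : R -> V) (t : R) q p :
  qc t = q -> pc t = p ->
  differentiable g (Mom b br q p) -> differentiable k (Mom b br q p) ->
  is_derive t 1 qc (hamvf (fun q' p' => g (Mom b br q' p')) q p).1 ->
  is_derive t 1 pc (hamvf (fun q' p' => g (Mom b br q' p')) q p).2 ->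
  is_derive t 1 (fun s => k (Mom b br (qc s) (pc s)))
    (lie_poisson b br k g (Mom b br q p)).
Proof.
move=> qt pt dg dk; rewrite hamvf_Mom //= => dq dp.
have brbil := lie_bracket_bilinear.
have Mt : Mom b br (qc t) (pc t) = Mom b br q p by rewrite qt pt.
have := is_derive_comp_Dgrad Mt dk (is_derive_bilin (Mom_bilinear brbil b) dq dp).
rewrite qt pt Mom_equivariant => dkM; apply: is_derive_eq dkM _.
rewrite /lie_poisson dpairZl (coad_dpair brbil) (lie_bracketC (Dgrad k _)) dpairNr.
by rewrite mulNr mulrN.
Qed.

Lemma lie_poissonC b g k mu : lie_poisson b br g k mu = - lie_poisson b br k g mu.
Proof. by rewrite /lie_poisson lie_bracketC dpairNr mulrN. Qed.

Lemma lie_poissonZr b g k (s : R) mu : differentiable k mu ->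
  lie_poisson b br g (fun x => s * k x) mu = s * lie_poisson b br g k mu.
Proof.
move=> dk; rewrite /lie_poisson DgradZ //.
by rewrite (bilinZr lie_bracket_bilinear) dpairZr mulrCA.
Qed.

End LiePoisson.

Theorem proposition4p4 (R : realType) (n : nat)
  (br : 'rV[R]_n -> 'rV[R]_n -> 'rV[R]_n) (b : bool) (f : 'rV[R]_n -> R) :
  lie_bracket br -> smooth f -> casimir b br f ->
  let F := fun q p => f (Mom b br q p) in
  (* F is the momentum map: X_{sF} = s_{T^*g} for every s *)
  (forall (s : R) (q p : 'rV[R]_n),
      hamvf (fun q' p' => s * F q' p') q p = actvf b br f s q p) /\
  (forall h : 'rV[R]_n -> R, smooth h ->
     let H := fun q p => h (Mom b br q p) in
     (* H is infinitesimally invariant under the action *)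
     (forall (s : R) (q p : 'rV[R]_n),
        'D_1 (fun t : R => H (q + t *: (actvf b br f s q p).1)
                             (p + t *: (actvf b br f s q p).2)) 0 = 0) /\
     (* F is constant along every solution of qdot = dH/dp, pdot = -dH/dq *)
     (forall (a c : R) (qc pc : R -> 'rV[R]_n),
        (forall t, a < t < c ->
           is_derive t 1 qc (hamvf H (qc t) (pc t)).1 /\
           is_derive t 1 pc (hamvf H (qc t) (pc t)).2) ->
        forall t1 t2, a < t1 < c -> a < t2 < c ->
          F (qc t1) (pc t1) = F (qc t2) (pc t2))).
Proof.
move=> Hbr sf cf F.
have df x : differentiable f x := sf [::] x.
have dsf (s : R) x : differentiable (fun mu => s * f mu) x.
  by rewrite -[fun mu => _]/(s \*: f); exact: differentiableZ.
have momentum s q p : hamvf (fun q' p' => s * F q' p') q p = actvf b br f s q p.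
  by rewrite (hamvf_Mom Hbr (dsf s _)) DgradZ.
split=> // h sh H; have dh x : differentiable h x := sh [::] x.
split=> [s q p | a c qc pc flow t1 t2].
  rewrite -momentum.
  have base (q0 v : 'rV[R]_n) : q0 + 0 *: v = q0 by rewrite scale0r addr0.
  have := is_derive_Mom_hamvf Hbr (b:=b) (base q _) (base p _) (dsf s _) (dh _)
    (is_derive_line _ _ _) (is_derive_line _ _ _).
  rewrite lie_poissonZr // lie_poissonC // cf // oppr0 mulr0 => dH.
  exact: (derive_val (is_derive:=dH)).
apply: (is_derive_0_is_cst_in (g := fun t => F (qc t) (pc t))) => t /flow[dq dp].
have := is_derive_Mom_hamvf Hbr erefl erefl (dh _) (df _) dq dp.
by rewrite cf.
Qed.
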